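(* Let $\mu$ be a log-concave probability measure on $\mathbb{R}$ with density $f$, and let $M=\|f\|_\infty$. Then $$\Gamma(\mu)=2M.$$
   Context: A probability measure on $\mathbb{R}$ is log-concave if it has a density $f$ with $\ln f$ concave. For an interval $I=[a,b]$, $\mu^+(\partial I)=\liminf_{\epsilon\to0^+}\frac{\mu([a-\epsilon,b+\epsilon])-\mu([a,b])}{\epsilon}$, and $\Gamma(\mu)=\sup\{\mu^+(\partial I): I=[a,b]\subset\mathbb{R},\ a<b\}$. *)

From HB Require Import structures.
From mathcomp Require Import all_boot all_order all_algebra.
From mathcomp Require Import all_classical all_reals all_analysis ess_sup_inf.
Set Implicit Arguments. Unset Strict Implicit. Unset Printing Implicit Defensive.
Import Order.TTheory GRing.Theory Num.Theory.
Import numFieldNormedType.Exports.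
Local Open Scope classical_set_scope.
Local Open Scope ring_scope.

Section defs.
Context {R : realType}.

(* ln f is concave as an extended-real function (ln 0 = -oo):
   the support {f > 0} is convex and ln f is concave on it. *)
Definition log_concave (f : R -> R) : Prop :=
  forall x y t, 0 < f x -> 0 < f y -> 0 <= t <= 1 ->
    0 < f (t * x + (1 - t) * y) /\
    t * ln (f x) + (1 - t) * ln (f y) <= ln (f (t * x + (1 - t) * y)).

Definition log_concave_prob_density (f : R -> R) : Prop :=
  [/\ measurable_fun [set: R] f,
      (forall x, 0 <= f x),
      (\int[lebesgue_measure]_(x in [set: R]) (f x)%:E = 1)%E
    & log_concave f].

Definition dmeasure (f : R -> R) (A : set R) : \bar R :=
  (\int[lebesgue_measure]_(x in A) (f x)%:E)%E.

(* mu^+(partial [a,b]) = liminf_{e -> 0+} (mu([a-e,b+e]) - mu([a,b])) / e,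
   with liminf written out as sup_{d>0} inf_{0<e<d}. *)
Definition boundary_measure (f : R -> R) (a b : R) : \bar R :=
  (ereal_sup [set ereal_inf
     [set (dmeasure f `[(a - e)%R, (b + e)%R] - dmeasure f `[a, b])%E
            * ((e : R)^-1)%:E
       | e in `]0%R, (d : R)[] | d in `]0%R, +oo[])%E.

Definition Gamma (f : R -> R) : \bar R :=
  ereal_sup [set v | exists a b : R, a < b /\ v = boundary_measure f a b].

Definition Linfty_norm (f : R -> R) : \bar R :=
  ess_sup lebesgue_measure (fun x => (`|f x|)%:E).

End defs.

From HB Require Import structures.
From mathcomp Require Import all_boot all_order all_algebra.
From mathcomp Require Import all_classical all_reals all_analysis ess_sup_inf.
From mathcomp Require Import lra ring measurable_realfun.
Set Implicit Arguments. Unset Strict Implicit. Unset Printing Implicit Defensive.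
Import Order.TTheory GRing.Theory Num.Theory.
Import numFieldNormedType.Exports.
Local Open Scope classical_set_scope.
Local Open Scope ring_scope.

(* For a <= b, the increment mu([a - e, b + e]) - mu([a, b]) is the f-mass of
   the shell [a - e, a[ U ]b, b + e], a set of Lebesgue measure 2e; hence every
   interval has boundary measure at most 2 ||f||_oo.  Conversely, log-concavity
   makes the superlevel sets of f convex.  For r < ||f||_oo the set {f > r} has
   two points x < y (a single point is Lebesgue-null), so f >= r on [x, y] and
   the middle third of [x, y] has boundary measure at least 2r. *)

Lemma lee_fin_ltP (R : realType) (x y : \bar R) :
  (forall r, (r%:E < x)%E -> (r%:E <= y)%E) -> (x <= y)%E.
Proof.
case: x y => [x||] [y||] // h; rewrite ?leey ?leNye //.
- rewrite lee_fin leNgt; apply/negP => yx.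
  by have := h ((x + y) / 2); rewrite !(lte_fin, lee_fin) => /(_ ltac:(lra)); lra.
- by have := h (x - 1); rewrite lte_fin gtrBl ltr01 leeNy_eq => /(_ isT).
- by have := h (y + 1); rewrite ltry lee_fin => /(_ isT); rewrite gerDl ler10.
- by have := h 0; rewrite ltry leeNy_eq => /(_ isT).
Qed.

Lemma lebesgue_measureT_gt0 (R : realType) :
  (0 < (lebesgue_measure : measure _ R) [set: R])%E.
Proof.
apply: (@lt_le_trans _ _ (lebesgue_measure `[0%R, 1%R]%classic)).
  by rewrite lebesgue_measure_itv /= lte_fin ltr01 sube0 lte01.
by apply: le_measure => //; rewrite inE.
Qed.

Section density_boundary.
Context {R : realType}.
Variable f : R -> R.
Hypothesis mf : measurable_fun [set: R] f.
Hypothesis f_ge0 : forall x, 0 <= f x.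
Implicit Types a b d e r : R.

Lemma boundary_measure_le_Gamma a b : a < b -> (boundary_measure f a b <= Gamma f)%E.
Proof.
by move=> ab; apply: le_ereal_sup_tmp; exists (boundary_measure f a b) => //; exists a, b.
Qed.

Definition itv_shell (a b e : R) : set R := `[a - e, a[%classic `|` `]b, b + e]%classic.

Lemma measurable_itv_shell a b e : measurable (itv_shell a b e).
Proof. exact: measurableU. Qed.

Lemma itv_shellU a b e : a <= b -> 0 <= e ->
  `[a - e, b + e]%classic = `[a, b]%classic `|` itv_shell a b e.
Proof.
move=> ab e0; apply/seteqP; split => x /=; rewrite /itv_shell /= !in_itv /=.
- move=> /andP[h1 h2].
  have [xa|ax] := ltP x a; first by right; left; apply/andP.
  have [bx|xb] := ltP b x; first by right; right; apply/andP.
  by left; apply/andP.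
- case=> [|[]] /andP[h1 h2]; apply/andP; split; lra.
Qed.

Lemma disjoint_itv_shell a b e : a <= b -> [disjoint `[a, b]%classic & itv_shell a b e].
Proof.
move=> ab; apply/eqP; rewrite -subset0 => x [] /=.
by rewrite /itv_shell /= !in_itv /= => /andP[h1 h2] [] /andP[h3 h4]; lra.
Qed.

Lemma lebesgue_measure_itv_shell a b e : a <= b -> 0 <= e ->
  lebesgue_measure (itv_shell a b e) = (2 * e)%:E.
Proof.
move=> ab e0; rewrite /itv_shell measureU //; last first.
  by rewrite -subset0 => x [] /=; rewrite !in_itv /= => /andP[? ?] /andP[? ?]; lra.
transitivity (lebesgue_measure `[(a - e)%R, a[%classic +
  lebesgue_measure `]b, (b + e)%R]%classic)%E; first by [].
rewrite !lebesgue_measure_itv /= !lte_fin.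
have [e_gt0|] := ltP 0 e; first by rewrite gtrBl ltrDl e_gt0 -EFinD; congr (_%:E); lra.
move=> e_le0; have -> : e = 0 by apply/le_anti; rewrite e_le0.
by rewrite subr0 addr0 !ltxx mulr0 add0e.
Qed.

Lemma measurable_EFin_density (D : set R) : measurable_fun D (fun x => (f x)%:E).
Proof. by apply/measurable_EFinP; apply: measurable_funS mf. Qed.

Lemma dmeasure_itv_shellD a b e : a <= b -> 0 <= e ->
  dmeasure f `[a - e, b + e] = (dmeasure f `[a, b] + dmeasure f (itv_shell a b e))%E.
Proof.
move=> ab e0; rewrite /dmeasure itv_shellU // integral_setU //.
- exact: measurable_itv_shell.
- exact: measurable_EFin_density.
- exact: disjoint_itv_shell.
Qed.

Lemma dmeasure_itv_shell_le a b e (M : \bar R) : a <= b -> 0 <= e -> (0 <= M)%E ->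
  (\forall x \ae lebesgue_measure, ((`|f x|)%:E <= M)%E) ->
  (dmeasure f (itv_shell a b e) <= M * (2 * e)%:E)%E.
Proof.
move=> ab e0 M0 [N [mN N0 fN]].
apply: (@le_trans _ _ (\int[lebesgue_measure]_(x in itv_shell a b e) cst M x)%E).
  apply: ae_ge0_le_integral => //.
  - exact: measurable_itv_shell.
  - by move=> x _; rewrite lee_fin.
  - exact: measurable_EFin_density.
  exists N; split => // x /= Nx; apply: fN => /= fxM; apply: Nx => _.
  by rewrite -(ger0_norm (f_ge0 x)).
rewrite integral_cst; last exact: measurable_itv_shell.
by rewrite [X in (_ * X)%E]lebesgue_measure_itv_shell.
Qed.

Lemma dmeasure_itv_shell_ge a b e r : a <= b -> 0 <= e -> 0 <= r ->
  (forall x, itv_shell a b e x -> r <= f x) ->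
  ((r * (2 * e))%:E <= dmeasure f (itv_shell a b e))%E.
Proof.
move=> ab e0 r0 rf.
apply: (@le_trans _ _ (\int[lebesgue_measure]_(x in itv_shell a b e) cst r%:E x)%E).
  rewrite integral_cst; last exact: measurable_itv_shell.
  by rewrite [X in (_ <= _ * X)%E]lebesgue_measure_itv_shell.
apply: ge0_le_integral => //.
- exact: measurable_itv_shell.
- exact: measurable_EFin_density.
Qed.

Hypothesis f_mass_fin : (\int[lebesgue_measure]_(x in [set: R]) (f x)%:E < +oo)%E.

Lemma dmeasure_fin_num A : measurable A -> dmeasure f A \is a fin_num.
Proof.
move=> mA; rewrite ge0_fin_numE; last by apply: integral_ge0 => x _; rewrite lee_fin.
apply: le_lt_trans f_mass_fin; apply: ge0_subset_integral => //.
- exact: measurable_EFin_density.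
- by move=> x _; rewrite lee_fin.
Qed.

Lemma dmeasure_itv_shellE a b e : a <= b -> 0 <= e ->
  (dmeasure f `[(a - e)%R, (b + e)%R] - dmeasure f `[a, b])%E = dmeasure f (itv_shell a b e).
Proof.
move=> ab e0; rewrite dmeasure_itv_shellD // [X in (X - _)%E]addeC addeK //.
exact: dmeasure_fin_num.
Qed.

Lemma boundary_measure_le a b (M : \bar R) : a <= b -> (0 <= M)%E ->
  (\forall x \ae lebesgue_measure, ((`|f x|)%:E <= M)%E) ->
  (boundary_measure f a b <= 2%:E * M)%E.
Proof.
move=> ab M0 fM; apply: ge_ereal_sup => _ [d /= d0 <-].
rewrite in_itv /= andbT in d0.
have e0 : 0 < d / 2 by lra.
apply: ge_ereal_inf; eexists.
  by exists (d / 2); rewrite //= in_itv /=; apply/andP; split; lra.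
rewrite dmeasure_itv_shellE ?(ltW e0) //.
apply: (@le_trans _ _ (M * (2 * (d / 2))%:E * ((d / 2)^-1)%:E)%E).
  apply: lee_wpmul2r; first by rewrite lee_fin invr_ge0 ltW.
  exact: dmeasure_itv_shell_le (ltW e0) _ _.
by rewrite -muleA -EFinM muleC -mulrA divff ?gt_eqF // mulr1.
Qed.

Lemma boundary_measure_ge a b r d : a <= b -> 0 <= r -> 0 < d ->
  (forall x, a - d <= x <= b + d -> r <= f x) ->
  ((2 * r)%:E <= boundary_measure f a b)%E.
Proof.
move=> ab r0 d0 rf; apply: le_ereal_sup_tmp.
eexists; first by exists d => //=; rewrite in_itv /= d0.
apply: le_ereal_inf_tmp => _ [e /= ed <-].
rewrite in_itv /= in ed; case/andP: ed => e0 ed.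
rewrite dmeasure_itv_shellE ?(ltW e0) //.
apply: (@le_trans _ _ ((r * (2 * e))%:E * (e^-1)%:E)%E).
  by rewrite -EFinM lee_fin -!mulrA divff ?gt_eqF // mulr1 mulrC.
apply: lee_wpmul2r; first by rewrite lee_fin invr_ge0 ltW.
apply: dmeasure_itv_shell_ge => //; first exact: ltW.
by move=> x [] /=; rewrite in_itv /= => /andP[h1 h2]; apply: rf; apply/andP; split; lra.
Qed.

Lemma Gamma_ge0 : (0 <= Gamma f)%E.
Proof.
apply: le_trans (boundary_measure_le_Gamma ltr01).
have := boundary_measure_ge ler01 (lexx 0) ltr01 (fun z _ => f_ge0 z).
by rewrite mulr0.
Qed.

Lemma Linfty_norm_ge0 : (0 <= Linfty_norm f)%E.
Proof. by apply: ess_sup_ger => [|t]; [exact: lebesgue_measureT_gt0|rewrite lee_fin]. Qed.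

Lemma Gamma_le_Linfty_norm : (Gamma f <= 2%:E * Linfty_norm f)%E.
Proof.
apply: ge_ereal_sup => _ [a [b [ab ->]]].
apply: boundary_measure_le (ltW ab) Linfty_norm_ge0 _.
exact: ess_sup_ge.
Qed.

End density_boundary.

Lemma log_concave_superlevel_convex (R : realType) (f : R -> R) (r x y z : R) :
  log_concave f -> 0 < r -> r < f x -> r < f y -> x <= z <= y -> r <= f z.
Proof.
move=> lc r0 rx ry /andP[xz zy].
have [xy|] := ltP x y; last first.
  move=> yx; have -> : z = x by apply/le_anti; rewrite xz (le_trans zy yx).
  exact: ltW.
pose t := (y - z) / (y - x).
have t01 : 0 <= t <= 1.
  rewrite /t divr_ge0 ?subr_ge0 ?(ltW xy) //=.
  by rewrite ler_pdivrMr ?subr_gt0 // mul1r lerD2l lerN2.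
have tz : t * x + (1 - t) * y = z by rewrite /t; field; rewrite subr_eq0 gt_eqF.
have [fz_gt0 lnfz] := lc x y t (lt_trans r0 rx) (lt_trans r0 ry) t01.
rewrite tz in fz_gt0 lnfz.
have lnrx : ln r <= ln (f x) by rewrite ler_ln ?posrE ?ltW // (lt_trans r0).
have lnry : ln r <= ln (f y) by rewrite ler_ln ?posrE ?ltW // (lt_trans r0).
have : ln r <= ln (f z) by case/andP: t01 => t0 t1; nra.
by rewrite ler_ln ?posrE.
Qed.

Lemma lt_ess_sup_two_points (R : realType) (g : R -> R) (r : R) :
  (r%:E < ess_sup lebesgue_measure (fun x => (`|g x|)%:E))%E ->
  exists x y, [/\ x < y, r < `|g x| & r < `|g y|].
Proof.
move=> r_lt; apply: contrapT => no_pair; move: r_lt; apply/negP; rewrite -leNgt.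
have uniq_above x y : r < `|g x| -> r < `|g y| -> x = y.
  move=> rx ry; apply: contrapT => /eqP; rewrite neq_lt => /orP[xy|yx]; apply: no_pair.
  - by exists x, y.
  - by exists y, x.
apply/ess_supP.
have [[x0 rx0]|none_above] := pselect (exists x0, r < `|g x0|).
- exists [set x0]; split => //; first exact: lebesgue_measure_set1.
  by move=> x /= /negP; rewrite lee_fin -ltNge => /uniq_above; apply.
- exists set0; split => // x /= /negP; rewrite lee_fin -ltNge => rx.
  by apply: none_above; exists x.
Qed.

Section log_concave_density.
Context {R : realType}.
Variable f : R -> R.
Hypothesis f_lcd : log_concave_prob_density f.

Let mf : measurable_fun [set: R] f. Proof. by case: f_lcd. Qed.
Let f_ge0 : forall x, 0 <= f x. Proof. by case: f_lcd. Qed.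
Let f_mass_fin : (\int[lebesgue_measure]_(x in [set: R]) (f x)%:E < +oo)%E.
Proof. by case: f_lcd => _ _ -> _; exact: ltey. Qed.

Lemma le_Gamma_of_lt_Linfty_norm r : 0 < r -> (r%:E < Linfty_norm f)%E ->
  ((2 * r)%:E <= Gamma f)%E.
Proof.
move=> r0 rM; have [_ _ _ lc] := f_lcd.
have [x [y [xy rx ry]]] := lt_ess_sup_two_points rM.
rewrite !ger0_norm // in rx ry.
pose d := (y - x) / 3.
have d0 : 0 < d by rewrite divr_gt0 // subr_gt0.
have inner_lt : x + d < y - d by rewrite /d; lra.
apply: le_trans (boundary_measure_le_Gamma f inner_lt).
apply: (boundary_measure_ge mf f_ge0 f_mass_fin (ltW inner_lt) (ltW r0) d0).
move=> z; rewrite /d => /andP[xz zy]; apply: log_concave_superlevel_convex lc r0 rx ry _.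
by apply/andP; split; lra.
Qed.

Lemma Linfty_norm_le_Gamma : (2%:E * Linfty_norm f <= Gamma f)%E.
Proof.
apply: lee_fin_ltP => r; rewrite -(lte_pdivrMl _ _ (ltr0n _ 2)) -EFinM => rM.
have [r_le0|r_gt0] := leP r 0.
  by apply: le_trans (Gamma_ge0 mf f_ge0 f_mass_fin); rewrite lee_fin.
have := le_Gamma_of_lt_Linfty_norm _ rM.
by rewrite mulrA divff ?pnatr_eq0 // mul1r; apply; rewrite mulr_gt0 ?invr_gt0.
Qed.

End log_concave_density.

Theorem proposition5p8 (R : realType) (f : R -> R) :
  log_concave_prob_density f ->
  Gamma f = (2%:E * Linfty_norm f)%E.
Proof.
move=> f_lcd; apply/le_anti/andP; split; last exact: Linfty_norm_le_Gamma.
case: f_lcd => mf f_ge0 f1 _; apply: Gamma_le_Linfty_norm => //.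
by rewrite f1; exact: ltey.
Qed.
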